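(* If $\Gamma_G$ is population monotonic, then $G$ has no induced subgraph isomorphic to the path $P_5$ (five vertices, four edges forming a path) and no induced subgraph isomorphic to the cycle $C_5$.
   Context: $G=(V,E;w)$ is a finite simple graph with edge weights $w:E\to\mathbb{R}$, $w_e>0$ for all $e\in E$. The matching game on $G$ is the cooperative game $\Gamma_G=(N,\gamma)$ with player set $N=V$ and, for $S\subseteq N$, $\gamma(S)$ equal to the maximum weight of a matching in the induced subgraph $G[S]$ (so $\gamma(\emptyset)=0$). A population monotonic allocation scheme (PMAS) is a family $(\boldsymbol{x}_S)_{\emptyset\neq S\subseteq N}$ with $\boldsymbol{x}_S=(x_{S,i})_{i\in S}\in\mathbb{R}^S$ such that (efficiency) $\sum_{i\in S}x_{S,i}=\gamma(S)$ for every nonempty $S\subseteq N$, and (monotonicity) $x_{S,i}\le x_{T,i}$ whenever $\emptyset\ne S\subseteq T\subseteq N$ and $i\in S$. $\Gamma_G$ is called population monotonic if it admits a PMAS. *)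

From HB Require Import structures.
From mathcomp Require Import all_boot all_order all_algebra.
Set Implicit Arguments. Unset Strict Implicit. Unset Printing Implicit Defensive.
Import Order.TTheory GRing.Theory Num.Theory.
Local Open Scope ring_scope.

(* A finite simple graph on vertex type V : finType is given by its edge set
   E : {set {set V}}, each edge being a 2-element subset of V.
   Edge weights are w : {set V} -> R (only values on edges matter). *)
Definition simple_graph (V : finType) (E : {set {set V}}) : Prop :=
  forall A, A \in E -> #|A| = 2%N.

Definition matching_in (V : finType) (E : {set {set V}}) (S : {set V})
  (M : {set {set V}}) : bool :=
  [&& M \subset E, [forall A in M, A \subset S] & trivIset M].

(* gamma(S) = maximum weight of a matching in G[S] (the empty matching has
   weight 0, so starting the max at 0 is harmless). *)
Definition gamma (R : realFieldType) (V : finType) (E : {set {set V}})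
  (w : {set V} -> R) (S : {set V}) : R :=
  \big[Num.max/0]_(M : {set {set V}} | matching_in E S M) \sum_(A in M) w A.

(* Population monotonic allocation scheme: x S i is the payoff of i in S. *)
Definition is_PMAS (R : realFieldType) (V : finType) (E : {set {set V}})
  (w : {set V} -> R) (x : {set V} -> V -> R) : Prop :=
  (forall S : {set V}, S != set0 -> \sum_(i in S) x S i = gamma E w S) /\
  (forall (S T : {set V}) (i : V), S != set0 -> S \subset T -> i \in S ->
      x S i <= x T i).

Definition population_monotonic (R : realFieldType) (V : finType)
  (E : {set {set V}}) (w : {set V} -> R) : Prop :=
  exists x : {set V} -> V -> R, is_PMAS E w x.

Definition has_induced (V : finType) (E : {set {set V}}) (n : nat)
  (adj : 'I_n -> 'I_n -> bool) : Prop :=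
  exists f : 'I_n -> V, injective f /\
    forall i j : 'I_n, ([set f i; f j] \in E) = adj i j.

Definition P5_adj (i j : 'I_5) : bool :=
  ((nat_of_ord i).+1 == j) || ((nat_of_ord j).+1 == i).

Definition C5_adj (i j : 'I_5) : bool :=
  (((nat_of_ord i).+1 %% 5)%N == j) || (((nat_of_ord j).+1 %% 5)%N == i).

From HB Require Import structures.
From mathcomp Require Import all_boot all_order all_algebra.
From mathcomp Require Import lra.
Set Implicit Arguments.
Unset Strict Implicit.
Unset Printing Implicit Defensive.

Import Order.TTheory GRing.Theory Num.Theory.
Local Open Scope ring_scope.

(* Let x be a PMAS and let a - b - c be an induced path (ab, bc
   edges, ac not an edge) with weights wab, wbc.  Every matching of G[{a,b,c}]
   has at most one edge, so gamma({a,b,c}) = max(wab, wbc), while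
   gamma({a,b}) = wab and gamma({b,c}) = wbc.  Efficiency and monotonicity
   then force the middle vertex to get at least min(wab, wbc) in both
   two-player coalitions {a,b} and {b,c}.
   On an induced path v0 - v1 - v2 - v3 - v4 with weights w1..w4 this gives
   min(w1,w2) + min(w2,w3) <= w2 and min(w2,w3) + min(w3,w4) <= w3, which is
   impossible for positive weights.  Both P5 and C5 contain such a pattern
   (v0v2, v1v3, v2v4 are non-edges in both), which proves the theorem. *)

Lemma sum_set2 (R : nmodType) (V : finType) (F : V -> R) (a b : V) :
  a != b -> \sum_(i in [set a; b]) F i = F a + F b.
Proof. by move=> ab; rewrite big_setU1 ?inE // big_set1. Qed.

Lemma sum_set3 (R : nmodType) (V : finType) (F : V -> R) (a b c : V) :
  a != b -> b != c -> a != c ->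
  \sum_(i in [set a; b; c]) F i = F a + F b + F c.
Proof.
move=> ab bc ac; rewrite -setUA big_setU1; last by rewrite !inE negb_or ab ac.
by rewrite sum_set2 //; exact: addrA.
Qed.

Lemma pair_of_set2 {V : finType} {a b : V} {A : {set V}} :
  a != b -> A \subset [set a; b] -> #|A| = 2%N -> A = [set a; b].
Proof. by move=> ab AS A2; apply/eqP; rewrite eqEcard AS cards2 ab A2. Qed.

Lemma pairs_of_set3 {V : finType} {a b c : V} {A : {set V}} :
  A \subset [set a; b; c] -> #|A| = 2%N ->
  [\/ A = [set a; b], A = [set b; c] | A = [set a; c]].
Proof.
move=> sub /eqP/cards2P [x [y [xy eA]]]; subst A.
have /subsetP sxy := sub; have := sxy x; have := sxy y.
rewrite !inE !eqxx orbT /= => /(_ isT) hy /(_ isT) hx.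
(* Nine cases for (x, y): the diagonal ones contradict x != y, the others are
   a listed pair up to the order of its two elements. *)
move: xy; case/orP: hx => [/orP[]|] /eqP ->; case/orP: hy => [/orP[]|] /eqP ->;
  rewrite ?eqxx // 1?[[set _; a]]setUC 1?[[set c; _]]setUC => _;
  by [apply: Or31 | apply: Or32 | apply: Or33].
Qed.

(* A set of pairwise disjoint sets all containing a common point has at most
   one element: this bounds the matchings of a star. *)
Lemma trivIset_through {V : finType} {M : {set {set V}}} (b : V) :
  trivIset M -> {in M, forall A : {set V}, b \in A} -> (#|M| <= 1)%N.
Proof.
move=> /trivIsetP tM bM; apply/card_le1_eqP => A B AM BM.
apply/eqP; apply/negPn/negP => neqAB.
by have := disjointFr (tM B A BM AM neqAB) (bM B BM); rewrite bM.
Qed.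

Lemma sum_le1_bound (R : numDomainType) (T : finType) (F : T -> R)
    (M : {set T}) (B : R) :
  (#|M| <= 1)%N -> 0 <= B -> {in M, forall A, F A <= B} ->
  \sum_(A in M) F A <= B.
Proof.
move=> /card_le1P M1 B0 FB; case: (set_0Vmem M) => [->|[A AM]].
  by rewrite big_set0.
have -> : M = [set A] by apply/setP => C; rewrite inE (M1 A AM).
by rewrite big_set1 FB ?set11.
Qed.

(* Weights w1..w4 > 0 of a path with four edges cannot leave room for the
   shares forced on its three inner vertices: if w2 <= w3 the first inequality
   forces min(w1, w2) <= 0, otherwise the second forces min(w3, w4) <= 0. *)
Lemma path4_shares_infeasible {R : realDomainType} {w1 w2 w3 w4 : R} :
  0 < w1 -> 0 < w2 -> 0 < w3 -> 0 < w4 ->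
  Num.min w1 w2 + Num.min w2 w3 <= w2 -> Num.min w2 w3 + Num.min w3 w4 <= w3 ->
  False.
Proof.
case: (leP w1 w2); case: (leP w2 w3); case: (leP w3 w4); lra.
Qed.

Section MatchingGame.
Variables (R : realFieldType) (V : finType) (E : {set {set V}}).
Variable w : {set V} -> R.
Hypothesis simpleE : simple_graph E.
Hypothesis w_pos : forall A, A \in E -> 0 < w A.

Lemma gamma_ge {S : {set V}} {M : {set {set V}}} :
  matching_in E S M -> \sum_(A in M) w A <= gamma E w S.
Proof. by move=> HM; rewrite /gamma (bigD1 M) //= le_max lexx. Qed.

Lemma gamma_le (S : {set V}) (B : R) : 0 <= B ->
  (forall M, matching_in E S M -> \sum_(A in M) w A <= B) -> gamma E w S <= B.
Proof.
move=> B0 H; apply: (big_ind (fun y => y <= B)) => // y z hy hz.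
by rewrite ge_max hy hz.
Qed.

Lemma gamma_edge {a b : V} :
  a != b -> [set a; b] \in E -> gamma E w [set a; b] = w [set a; b].
Proof.
move=> ab Eab; have w0 := ltW (w_pos Eab); apply/eqP; rewrite eq_le.
apply/andP; split.
  apply: gamma_le => // M /and3P[/subsetP ME /forall_inP MS _].
  have M_ab : M \subset [set [set a; b]].
    by apply/subsetP => A AM; rewrite inE (pair_of_set2 ab (MS A AM) (simpleE (ME A AM))).
  apply: sum_le1_bound => // [|A /(subsetP M_ab) /set1P -> //].
  by rewrite (leq_trans (subset_leq_card M_ab)) ?cards1.
have HM : matching_in E [set a; b] [set [set a; b]].
  rewrite /matching_in sub1set Eab /=; apply/andP; split.
    by apply/forall_inP => A /set1P ->.
  by apply/trivIsetP => A B /set1P -> /set1P ->; rewrite eqxx.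
by have := gamma_ge HM; rewrite big_set1.
Qed.

(* On an induced path a - b - c a matching of G[{a, b, c}] uses at most one
   edge, and that edge is ab or bc; hence gamma {a, b, c} <= max(wab, wbc). *)
Lemma gamma_induced_path3 {a b c : V} :
  [set a; b] \in E -> [set b; c] \in E -> [set a; c] \notin E ->
  gamma E w [set a; b; c] <= Num.max (w [set a; b]) (w [set b; c]).
Proof.
move=> Eab Ebc Nac; apply: gamma_le; first by rewrite le_max ltW ?w_pos.
move=> M /and3P[/subsetP ME /forall_inP MS tM].
have edgeM : {in M, forall A, A = [set a; b] \/ A = [set b; c]}.
  move=> A AM; have [->|->|eA] := pairs_of_set3 (MS A AM) (simpleE (ME A AM)).
  - by left.
  - by right.
  - by have := ME A AM; rewrite eA (negbTE Nac).
apply: sum_le1_bound => [| |A /edgeM [] ->].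
- by apply: (trivIset_through (b := b) tM) => A /edgeM [] ->; rewrite !inE eqxx ?orbT.
- by rewrite le_max ltW ?w_pos.
- by rewrite le_max lexx.
- by rewrite le_max lexx orbT.
Qed.

Section Allocation.
Variable x : {set V} -> V -> R.
Hypothesis x_pmas : is_PMAS E w x.

Let set2_neq0 (a b : V) : [set a; b] != set0.
Proof. by apply/set0Pn; exists a; rewrite !inE eqxx. Qed.

Lemma pmas_edge {a b : V} : a != b -> [set a; b] \in E ->
  x [set a; b] a + x [set a; b] b = w [set a; b].
Proof.
by move=> ab Eab; rewrite -sum_set2 // (proj1 x_pmas) ?set2_neq0 ?gamma_edge.
Qed.

(* By monotonicity
   x_ab(a) + x_bc(b) + x_bc(c) <= x_abc(a) + x_abc(b) + x_abc(c) = gamma {a,b,c},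
   which is at most max(wab, wbc); since x_bc(b) + x_bc(c) = wbc this gives
   x_ab(b) = wab - x_ab(a) >= wab + wbc - max(wab, wbc) = min(wab, wbc). *)
Lemma pmas_middle_share {a b c : V} :
  a != b -> b != c -> a != c ->
  [set a; b] \in E -> [set b; c] \in E -> [set a; c] \notin E ->
  Num.min (w [set a; b]) (w [set b; c]) <= x [set a; b] b.
Proof.
move=> ab bc ac Eab Ebc Nac; have [eff mono] := x_pmas.
have abc_neq0 : [set a; b; c] != set0.
  by apply/set0Pn; exists a; rewrite !inE eqxx.
have sub_ab : [set a; b] \subset [set a; b; c].
  by apply/subsetP => z; rewrite !inE => ->.
have sub_bc : [set b; c] \subset [set a; b; c].
  by apply/subsetP => z; rewrite !inE => /orP[] ->; rewrite ?orbT.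
have mono_a := mono _ _ a (set2_neq0 a b) sub_ab (set21 a b).
have mono_b := mono _ _ b (set2_neq0 b c) sub_bc (set21 b c).
have mono_c := mono _ _ c (set2_neq0 b c) sub_bc (set22 b c).
have eff_abc := eff _ abc_neq0; rewrite sum_set3 // in eff_abc.
have gamma_abc := gamma_induced_path3 Eab Ebc Nac.
have eff_ab := pmas_edge ab Eab; have eff_bc := pmas_edge bc Ebc.
move: gamma_abc; rewrite -eff_abc.
case: (leP (w [set a; b]) (w [set b; c])) => _; lra.
Qed.

Lemma pmas_middle_share_right {a b c : V} :
  a != b -> b != c -> a != c ->
  [set a; b] \in E -> [set b; c] \in E -> [set a; c] \notin E ->
  Num.min (w [set a; b]) (w [set b; c]) <= x [set b; c] b.
Proof.
move=> ab bc ac Eab Ebc Nac; rewrite minC [[set a; b]]setUC [[set b; c]]setUC.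
by apply: pmas_middle_share; rewrite 1?eq_sym // setUC // 1?setUC.
Qed.
End Allocation.

(* A population monotonic game has no induced path v0 - v1 - v2 - v3 - v4
   (edges v0v1, v1v2, v2v3, v3v4; non-edges v0v2, v1v3, v2v4; the pair v0v4
   is unconstrained, so this covers both P5 and C5). *)
Lemma no_induced_path4 (v0 v1 v2 v3 v4 : V) :
  population_monotonic E w ->
  v0 != v1 -> v1 != v2 -> v0 != v2 -> v2 != v3 -> v1 != v3 -> v3 != v4 ->
  v2 != v4 ->
  [set v0; v1] \in E -> [set v1; v2] \in E -> [set v2; v3] \in E ->
  [set v3; v4] \in E ->
  [set v0; v2] \notin E -> [set v1; v3] \notin E -> [set v2; v4] \notin E ->
  False.
Proof.
move=> [x x_pmas] d01 d12 d02 d23 d13 d34 d24 E01 E12 E23 E34 N02 N13 N24.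
have share1 := pmas_middle_share_right x_pmas d01 d12 d02 E01 E12 N02.
have share2l := pmas_middle_share x_pmas d12 d23 d13 E12 E23 N13.
have share2r := pmas_middle_share_right x_pmas d12 d23 d13 E12 E23 N13.
have share3 := pmas_middle_share x_pmas d23 d34 d24 E23 E34 N24.
have eff12 := pmas_edge x_pmas d12 E12; have eff23 := pmas_edge x_pmas d23 E23.
apply: (path4_shares_infeasible (w_pos E01) (w_pos E12) (w_pos E23)
  (w_pos E34)); lra.
Qed.

Lemma no_induced_path4_pattern (adj : 'I_5 -> 'I_5 -> bool) :
  population_monotonic E w ->
  adj (inord 0) (inord 1) -> adj (inord 1) (inord 2) ->
  adj (inord 2) (inord 3) -> adj (inord 3) (inord 4) ->
  ~~ adj (inord 0) (inord 2) -> ~~ adj (inord 1) (inord 3) ->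
  ~~ adj (inord 2) (inord 4) -> ~ has_induced E adj.
Proof.
move=> PM a01 a12 a23 a34 n02 n13 n24 [f [f_inj f_adj]].
apply: (@no_induced_path4 (f (inord 0)) (f (inord 1)) (f (inord 2))
  (f (inord 3)) (f (inord 4)) PM); rewrite ?(inj_eq f_inj) ?f_adj //;
  by rewrite -val_eqE /= !inordK.
Qed.

End MatchingGame.

Theorem mainTheorem10 (R : realFieldType) (V : finType) (E : {set {set V}})
  (w : {set V} -> R) :
  simple_graph E ->
  (forall A, A \in E -> 0 < w A) ->
  population_monotonic E w ->
  ~ has_induced E P5_adj /\ ~ has_induced E C5_adj.
Proof.
move=> simpleE w_pos PM; split; apply: (no_induced_path4_pattern simpleE w_pos PM);
  by rewrite /P5_adj /C5_adj ?inordK.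
Qed.
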